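(* Let $(\vdash,\overline{\cdot},\widehat{\cdot})$ be a setting satisfying Pre-Relevance, let $\mathcal{S},\mathcal{S}'\subseteq\mathcal{L}$ with $\mathcal{S}\mid\mathcal{S}'$, let $\mathsf{Sem}\in\{\mathsf{Cmp},\mathsf{Prf},\mathsf{Grd}\}$, and let $\mathcal{E}_1\in\mathsf{Sem}(\mathcal{AF}_{\vdash}(\mathcal{S}))$. Then there is an $\mathcal{E}\in\mathsf{Sem}(\mathcal{AF}_{\vdash}(\mathcal{S}\cup\mathcal{S}'))$ with $\mathcal{E}_1=\mathcal{E}\cap\mathit{Arg}_{\vdash}(\mathcal{S})$.
   Context: $\mathcal{L}$ is the set of formulas of a language built from propositional atoms; $\mathsf{Atoms}(\mathcal{S})$ is the set of atoms occurring in $\mathcal{S}$, and $\mathcal{S}_1\mid\mathcal{S}_2$ means $\mathsf{Atoms}(\mathcal{S}_1)\cap\mathsf{Atoms}(\mathcal{S}_2)=\emptyset$. A setting is $(\vdash,\overline{\cdot},\widehat{\cdot})$ with ${\vdash}\subseteq\wp_{\sf fin}(\mathcal{L})\times\mathcal{L}$ arbitrary, $\overline{\cdot}:\mathcal{L}\to\wp(\mathcal{L})$, $\widehat{\cdot}$ assigning to each nonempty finite set a finite set of formulas, with $\widehat{\emptyset}=\emptyset$. $\mathit{Arg}_{\vdash}(\mathcal{S})=\{(\Gamma,\gamma):\Gamma\subseteq\mathcal{S}\text{ finite},\Gamma\vdash\gamma\}$; $\mathcal{AF}_{\vdash}(\mathcal{S})$ is the attack graph on it where $(\Gamma,\gamma)$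 attacks $(\Gamma',\gamma')$ iff $\gamma\in\overline{\phi}$ for some $\phi\in\widehat{\Gamma'}$. Complete extension = conflict-free set defending each member (every attacker of a member is attacked by a member) and containing every argument it defends; $\mathsf{Cmp}(\cdot)$ is the set of complete extensions, $\mathsf{Prf}(\cdot)$ the $\subseteq$-maximal ones, and $\mathsf{Grd}(\cdot)$ the singleton containing the $\subseteq$-minimal one. Pre-Relevance of the setting: (a) for all $\mathcal{S}_1,\mathcal{S}_2,\phi$ with $\mathcal{S}_1\cup\{\phi\}\mid\mathcal{S}_2$, $\mathcal{S}_1\cup\mathcal{S}_2\vdash\phi$ implies $\mathcal{S}_1'\vdash\phi$ for some $\mathcal{S}_1'\subseteq\mathcal{S}_1$; (b) primeness: for all sets of atoms $\mathcal{A}_1\mid\mathcal{A}_2$, all finite $\mathcal{S}_1,\mathcal{T}_1,\mathcal{S}_2,\mathcal{T}_2$ with $\mathsf{Atoms}(\mathcal{S}_i),\mathsf{Atoms}(\mathcal{T}_i)\subseteq\mathcal{A}_i$, and all $\phi,\psi$ with $\psi\in\overline{\phi}$, $\phi\in\widehat{\mathcal{T}_1\cup\mathcal{T}_2}$: if $\mathcal{S}_1\cup\mathcal{S}_2\vdash\psi$ then there are $i\in\{1,2\}$, $\mathcal{S}_i'\subseteq\mathcal{S}_i$, $\phi_i\in\widehat{\mathcal{T}_i}$, $\psi_i\in\overline{\phi_i}$ with $\mathcal{S}_i'\vdash\psi_i$; (c) $\widehat{\Delta}\subseteq\widehat{\Delta\cup\Delta'}$ for all finite $\Delta,\Delta'$.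 *)

From mathcomp Require Import all_boot finmap.
Set Implicit Arguments. Unset Strict Implicit. Unset Printing Implicit Defensive.
Local Open Scope fset_scope.

Section Setting.
Variables (Form : choiceType) (Atom : Type) (atoms : Form -> Atom -> Prop).
Variables (vdash : {fset Form} -> Form -> Prop)
          (contr : Form -> Form -> Prop)   (* contr phi psi  <->  psi \in overline phi *)
          (hat : {fset Form} -> {fset Form}).

Definition AtomsOf (S : Form -> Prop) : Atom -> Prop :=
  fun a => exists f, S f /\ atoms f a.
Definition fsetP_ (D : {fset Form}) : Form -> Prop := fun f => f \in D.

Definition atom_disjoint (S1 S2 : Form -> Prop) : Prop :=
  forall a, AtomsOf S1 a -> AtomsOf S2 a -> False.

Definition atoms_within (D : {fset Form}) (A : Atom -> Prop) : Prop :=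
  forall a, AtomsOf (fsetP_ D) a -> A a.

Definition pre_relevance : Prop :=
  (forall (S1 S2 : {fset Form}) (phi : Form),
      atom_disjoint (fsetP_ (phi |` S1)) (fsetP_ S2) ->
      vdash (S1 `|` S2) phi ->
      exists S1' : {fset Form}, S1' `<=` S1 /\ vdash S1' phi) /\
  (forall (A1 A2 : Atom -> Prop),
      (forall a, A1 a -> A2 a -> False) ->
      forall (S1 T1 S2 T2 : {fset Form}),
      atoms_within S1 A1 -> atoms_within T1 A1 ->
      atoms_within S2 A2 -> atoms_within T2 A2 ->
      forall phi psi : Form,
      contr phi psi -> phi \in hat (T1 `|` T2) ->
      vdash (S1 `|` S2) psi ->
      (exists S1' phi1 psi1, S1' `<=` S1 /\ phi1 \in hat T1 /\
                             contr phi1 psi1 /\ vdash S1' psi1) \/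
      (exists S2' phi2 psi2, S2' `<=` S2 /\ phi2 \in hat T2 /\
                             contr phi2 psi2 /\ vdash S2' psi2)) /\
  (forall D D' : {fset Form}, hat D `<=` hat (D `|` D')).

Definition argument : Type := ({fset Form} * Form)%type.

Definition Arg (S : Form -> Prop) : argument -> Prop :=
  fun a => (forall f, f \in a.1 -> S f) /\ vdash a.1 a.2.

Definition attacks (a b : argument) : Prop :=
  exists phi, phi \in hat b.1 /\ contr phi a.2.

Definition conflict_free (S : Form -> Prop) (E : argument -> Prop) : Prop :=
  forall a b, E a -> E b -> ~ attacks a b.

Definition defends (S : Form -> Prop) (E : argument -> Prop) (a : argument) : Prop :=
  forall b, Arg S b -> attacks b a -> exists c, E c /\ attacks c b.

Definition complete_ext (S : Form -> Prop) (E : argument -> Prop) : Prop :=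
  (forall a, E a -> Arg S a) /\
  conflict_free S E /\
  (forall a, E a -> defends S E a) /\
  (forall a, Arg S a -> defends S E a -> E a).

Definition subset_args (E F : argument -> Prop) : Prop := forall a, E a -> F a.

Definition preferred_ext (S : Form -> Prop) (E : argument -> Prop) : Prop :=
  complete_ext S E /\
  (forall F, complete_ext S F -> subset_args E F -> subset_args F E).

Definition grounded_ext (S : Form -> Prop) (E : argument -> Prop) : Prop :=
  complete_ext S E /\ (forall F, complete_ext S F -> subset_args E F).

End Setting.

Inductive semantics := Cmp | Prf | Grd.

Definition in_sem (Form : choiceType) (vdash : {fset Form} -> Form -> Prop)
  (contr : Form -> Form -> Prop) (hat : {fset Form} -> {fset Form})
  (sem : semantics) (S : Form -> Prop) (E : argument Form -> Prop) : Prop :=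
  match sem with
  | Cmp => complete_ext vdash contr hat S E
  | Prf => preferred_ext vdash contr hat S E
  | Grd => grounded_ext vdash contr hat S E
  end.

From mathcomp Require Import all_boot finmap.
From mathcomp Require boolp classical_sets.
Set Implicit Arguments. Unset Strict Implicit. Unset Printing Implicit Defensive.
Local Open Scope fset_scope.

(* Primeness makes the two halves independent: if an argument attacks one whose
   premises split as T1 `|` T2, with T1 over S and T2 over S', then a
   sub-argument of the attacker built on one side alone already attacks the
   premises T1, resp. T2, of that side.  So an argument over S' attacks an
   argument over S only if some premiseless argument does; premiseless
   arguments cannot be attacked (hat fset0 = fset0), hence lie in every
   complete extension of S, which therefore repels such attacks.  It follows
   that for complete extensions E1 of S and E2 of S' the arguments over
   S \/ S' defended by E1 \/ E2 form a complete extension whose trace on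
   Arg S is E1.  Conversely a complete extension of S \/ S' restricts to
   complete extensions of S and of S', so taking E2 grounded (resp. preferred)
   makes the glued extension grounded (resp. preferred). *)

Section Framework.
Variables (Form : choiceType) (vdash : {fset Form} -> Form -> Prop)
  (contr : Form -> Form -> Prop) (hat : {fset Form} -> {fset Form}).
Variable T : Form -> Prop.
Local Notation att := (attacks contr hat).
Local Notation defends := (defends vdash contr hat T).
Local Notation complete := (complete_ext vdash contr hat T).
Local Notation conflict_free := (conflict_free contr hat T).

Definition admissible (X : argument Form -> Prop) : Prop :=
  [/\ forall a, X a -> Arg vdash T a, conflict_free X & forall a, X a -> defends X a].

Lemma defends_mono (X Y : argument Form -> Prop) a :
  subset_args X Y -> defends X a -> defends Y a.
Proof.
move=> XY Xa b Tb ba; have [c [Xc cb]] := Xa b Tb ba.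
by exists c; split => //; apply: XY.
Qed.

Lemma complete_admissible X : complete X -> admissible X.
Proof. by case=> XT [Xcf [Xdef _]]. Qed.

Lemma defended_conflict_free (D E : argument Form -> Prop) :
  conflict_free D -> (forall e, D e -> Arg vdash T e) ->
  (forall a, E a -> Arg vdash T a /\ defends D a) -> conflict_free E.
Proof.
move=> Dcf DT ED a b /ED [Ta Da] /ED [_ Db] ab.
have [e [De ea]] := Db a Ta ab.
have [e' [De' e'e]] := Da e (DT e De) ea.
exact: Dcf e' e De' De e'e.
Qed.

Lemma admissible_add_defended X a :
  admissible X -> Arg vdash T a -> defends X a ->
  admissible (fun x => X x \/ x = a).
Proof.
case=> XT Xcf Xdef Ta Da.
have X_att_a c : X c -> att c a -> False.
  move=> Xc ca; have [c' [Xc' c'c]] := Da c (XT c Xc) ca.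
  exact: Xcf c' c Xc' Xc c'c.
split.
- by move=> x [/XT | ->].
- move=> x y [Xx | ->] [Xy | ->].
  + exact: Xcf.
  + exact: X_att_a.
  + move=> ay; have [c [Xc ca]] := Xdef y Xy a Ta ay; exact: X_att_a Xc ca.
  + move=> aa; have [c [Xc ca]] := Da a Ta aa; exact: X_att_a Xc ca.
- have XXa : subset_args X (fun x => X x \/ x = a) by move=> x; left.
  by move=> x [/Xdef | ->]; [exact: defends_mono XXa | exact: defends_mono XXa Da].
Qed.

Lemma maximal_admissible_complete X :
  admissible X -> (forall Y, classical_sets.proper X Y -> ~ admissible Y) ->
  complete X.
Proof.
move=> Xadm Xmax; have [XT Xcf Xdef] := Xadm.
do 3 (split => //); move=> a Ta Da; apply: boolp.contrapT => Xna.
apply: (Xmax _ _ (admissible_add_defended Xadm Ta Da)).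
by split=> [x Xx | sub]; [left | exact: Xna (sub a (or_intror erefl))].
Qed.

Lemma preferred_exists : exists P, preferred_ext vdash contr hat T P.
Proof.
have [M [Madm Mmax]] : exists M, admissible M /\
    forall Y, classical_sets.proper M Y -> ~ admissible Y.
  apply: classical_sets.Zorn_bigcup => F Fadm Ftot; split.
  - by move=> a [X FX Xa]; case: (Fadm X FX) => XT _ _; apply: XT.
  - move=> a b [X FX Xa] [Y FY Yb]; case: (Ftot X Y FX FY) => [XY | YX].
    + by case: (Fadm Y FY) => _ Ycf _; apply: Ycf (XY a Xa) Yb.
    + by case: (Fadm X FX) => _ Xcf _; apply: Xcf Xa (YX b Yb).
  - move=> a [X FX Xa] c Tc ca; case: (Fadm X FX) => _ _ Xdef.
    have [e [Xe ec]] := Xdef a Xa c Tc ca.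
    by exists e; split => //; exists X.
exists M; split; first exact: maximal_admissible_complete.
move=> F /complete_admissible Fadm MF a Fa; apply: boolp.contrapT => Mna.
by apply: (Mmax F) => //; split => // FM; apply: Mna; apply: FM.
Qed.

Lemma grounded_exists : exists G, grounded_ext vdash contr hat T G.
Proof.
(* G is the least set closed under the defence operator; it is conflict-free
   because it lies inside a complete extension, which exists by Zorn. *)
pose closed (X : argument Form -> Prop) := forall b, Arg vdash T b -> defends X b -> X b.
pose G a := forall X, closed X -> X a.
have G_least X : closed X -> subset_args G X by move=> X_closed a; apply.
have complete_closed X : complete X -> closed X by case=> _ [_ []].
have G_closed : closed G.
  move=> b Tb Gb X X_closed.
  exact: X_closed Tb (defends_mono (G_least X X_closed) Gb).
have GT : forall a, G a -> Arg vdash T a by apply: G_least.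
have [C [Ccmp _]] := preferred_exists.
have GC := G_least C (complete_closed C Ccmp).
exists G; split => [|F /complete_closed]; last exact: G_least.
split=> //; split; first by move=> a b /GC Ca /GC Cb; apply: Ccmp.2.1.
split=> // a Ga.
suff [] : Arg vdash T a /\ defends G a by [].
apply: (G_least (fun a => Arg vdash T a /\ defends G a)) Ga => b Tb Db.
by split=> //; apply: defends_mono Db => x [Tx /G_closed]; apply.
Qed.

End Framework.

Section SubArguments.
Variables (Form : choiceType) (vdash : {fset Form} -> Form -> Prop)
  (contr : Form -> Form -> Prop) (hat : {fset Form} -> {fset Form}).
Hypothesis hat0 : hat fset0 = fset0.
Hypothesis hat_subU : forall D D' : {fset Form}, hat D `<=` hat (D `|` D').
Local Notation att := (attacks contr hat).
Local Notation complete := (complete_ext vdash contr hat).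

Lemma hat_mono (D D' : {fset Form}) : D `<=` D' -> hat D `<=` hat D'.
Proof. by move=> DD'; have := hat_subU D D'; rewrite (fsetUidPr _ _ DD'). Qed.

Lemma attacks_sub (a b b' : argument Form) : b.1 `<=` b'.1 -> att a b -> att a b'.
Proof.
move=> bb' [phi [phi_b phi_a]]; exists phi; split => //.
exact: fsubsetP (hat_mono bb') _ phi_b.
Qed.

Lemma defends_sub T X (a a' : argument Form) :
  a'.1 `<=` a.1 -> defends vdash contr hat T X a -> defends vdash contr hat T X a'.
Proof. by move=> a'a Da b Tb ba'; apply: Da Tb (attacks_sub a'a ba'). Qed.

Lemma complete_sub_closed T F (a a' : argument Form) :
  complete T F -> F a -> Arg vdash T a' -> a'.1 `<=` a.1 -> F a'.
Proof.
case=> _ [_ [Fdef Fcl]] Fa Ta' a'a.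
exact: Fcl Ta' (defends_sub a'a (Fdef a Fa)).
Qed.

Lemma premiseless_unattacked (a : argument Form) x : ~ att a (fset0, x).
Proof. by case=> phi [/=]; rewrite hat0 in_fset0. Qed.

Lemma complete_premiseless T X psi :
  complete T X -> vdash fset0 psi -> X (fset0, psi).
Proof.
case=> _ [_ [_ Xcl]] psi0; apply: Xcl => [|c _ /premiseless_unattacked //].
by split=> //= f; rewrite in_fset0.
Qed.

End SubArguments.

(* Condition (b) of [pre_relevance]. *)
Definition primeness (Form : choiceType) (Atom : Type) (atoms : Form -> Atom -> Prop)
    (vdash : {fset Form} -> Form -> Prop) (contr : Form -> Form -> Prop)
    (hat : {fset Form} -> {fset Form}) : Prop :=
  forall A1 A2 : Atom -> Prop,
  (forall a, A1 a -> A2 a -> False) ->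
  forall S1 T1 S2 T2 : {fset Form},
  atoms_within atoms S1 A1 -> atoms_within atoms T1 A1 ->
  atoms_within atoms S2 A2 -> atoms_within atoms T2 A2 ->
  forall phi psi : Form,
  contr phi psi -> phi \in hat (T1 `|` T2) ->
  vdash (S1 `|` S2) psi ->
  (exists S1' phi1 psi1, S1' `<=` S1 /\ phi1 \in hat T1 /\
                         contr phi1 psi1 /\ vdash S1' psi1) \/
  (exists S2' phi2 psi2, S2' `<=` S2 /\ phi2 \in hat T2 /\
                         contr phi2 psi2 /\ vdash S2' psi2).

Lemma atoms_within_AtomsOf (Form : choiceType) (Atom : Type)
    (atoms : Form -> Atom -> Prop) (D : {fset Form}) (P : Form -> Prop) :
  (forall f, f \in D -> P f) -> atoms_within atoms D (AtomsOf atoms P).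
Proof. by move=> DP a [f [Df fa]]; exists f; split => //; apply: DP. Qed.

Lemma atom_disjoint_sym (Form : choiceType) (Atom : Type)
    (atoms : Form -> Atom -> Prop) (S S' : Form -> Prop) :
  atom_disjoint atoms S S' -> atom_disjoint atoms S' S.
Proof. by move=> SS' a aS' aS; apply: SS' aS aS'. Qed.

Lemma split_premises (Form : choiceType) (S S' U : Form -> Prop) (G : {fset Form}) :
  (forall f, U f <-> S f \/ S' f) -> (forall f, f \in G -> U f) ->
  exists G1 G2, G = G1 `|` G2 /\
    (forall f, f \in G1 -> S f) /\ (forall f, f \in G2 -> S' f).
Proof.
move=> HU GU; exists [fset x in G | boolp.asbool (S x)],
                    [fset x in G | ~~ boolp.asbool (S x)].
split; last split.
- by apply/fsetP => x; rewrite !inE; case: (x \in G); case: boolp.asbool.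
- by move=> x; rewrite !inE => /andP [_ /boolp.asboolP].
- move=> x; rewrite !inE => /andP [/GU/HU Sx /boolp.asboolP nSx].
  by case: Sx.
Qed.

Section Primeness.
Variables (Form : choiceType) (Atom : Type) (atoms : Form -> Atom -> Prop)
  (vdash : {fset Form} -> Form -> Prop) (contr : Form -> Form -> Prop)
  (hat : {fset Form} -> {fset Form}).
Hypothesis hat0 : hat fset0 = fset0.
Hypothesis hat_subU : forall D D' : {fset Form}, hat D `<=` hat (D `|` D').
Hypothesis hat_prime : primeness atoms vdash contr hat.
Variables (S S' U : Form -> Prop).
Hypothesis disjoint : atom_disjoint atoms S S'.
Hypothesis HU : forall f, U f <-> S f \/ S' f.
Local Notation att := (attacks contr hat).
Local Notation complete := (complete_ext vdash contr hat).
Local Notation defends := (defends vdash contr hat).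

Lemma attacks_split (C1 C2 T1 T2 : {fset Form}) psi beta :
  (forall f, f \in C1 -> S f) -> (forall f, f \in T1 -> S f) ->
  (forall f, f \in C2 -> S' f) -> (forall f, f \in T2 -> S' f) ->
  vdash (C1 `|` C2) psi -> att (C1 `|` C2, psi) (T1 `|` T2, beta) ->
  (exists D psi1, D `<=` C1 /\ vdash D psi1 /\ att (D, psi1) (T1, beta)) \/
  (exists D psi2, D `<=` C2 /\ vdash D psi2 /\ att (D, psi2) (T2, beta)).
Proof.
move=> C1S T1S C2S' T2S' psi_C [phi [phi_T phi_psi]].
have := hat_prime disjoint (atoms_within_AtomsOf C1S) (atoms_within_AtomsOf T1S)
  (atoms_within_AtomsOf C2S') (atoms_within_AtomsOf T2S') phi_psi phi_T psi_C.
case=> [[D [phi1 [psi1 [DC [phiT [phipsi psiD]]]]]] |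
        [D [phi1 [psi1 [DC [phiT [phipsi psiD]]]]]]];
  [left | right]; exists D, psi1; do 2 (split => //); by exists phi1.
Qed.

Lemma sub_attacker_in_S (c b : argument Form) :
  Arg vdash U c -> (forall f, f \in b.1 -> S f) -> att c b ->
  exists c1, c1.1 `<=` c.1 /\ Arg vdash S c1 /\ att c1 b.
Proof.
case: c b => [C psi] [B beta] [/= CU psi_C] BS cb.
have [C1 [C2 [CE [C1S C2S']]]] := split_premises HU CU; subst C.
have noS' f : f \in fset0 -> S' f by rewrite in_fset0.
have cb' : att (C1 `|` C2, psi) (B `|` fset0, beta) by rewrite fsetU0.
case: (attacks_split C1S BS C2S' noS' psi_C cb') =>
  [[D [psi1 [DC1 [psi_D Db]]]] | [D [psi2 [_ [_ /(premiseless_unattacked hat0) //]]]]].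
exists (D, psi1); split; first exact: fsubset_trans DC1 (fsubsetUl _ _).
split=> //; split=> // f /(fsubsetP DC1); exact: C1S.
Qed.

Lemma premiseless_attacker_across (e c : argument Form) :
  Arg vdash S' e -> (forall f, f \in c.1 -> S f) -> att e c ->
  exists psi, vdash fset0 psi /\ att (fset0, psi) c.
Proof.
case: e c => [C eps] [B beta] [/= CS' eps_C] BS ec.
have noS f : f \in fset0 -> S f by rewrite in_fset0.
have noS' f : f \in fset0 -> S' f by rewrite in_fset0.
have eps_C' : vdash (fset0 `|` C) eps by rewrite fset0U.
have ec' : att (fset0 `|` C, eps) (B `|` fset0, beta) by rewrite fset0U fsetU0.
case: (attacks_split noS BS CS' noS' eps_C' ec') =>
  [[D [psi [D0 [psi_D Db]]]] |
   [D [psi [_ [_ /(premiseless_unattacked hat0) //]]]]].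
by move: D0 psi_D Db; rewrite fsubset0 => /eqP ->; exists psi.
Qed.

Lemma sub_attacker_one_side (c b : argument Form) :
  Arg vdash U c -> (forall f, f \in b.1 -> U f) -> att c b ->
  exists c1, c1.1 `<=` c.1 /\ (Arg vdash S c1 \/ Arg vdash S' c1) /\ att c1 b.
Proof.
case: c b => [C psi] [B beta] [/= CU psi_C] BU cb.
have [C1 [C2 [CE [C1S C2S']]]] := split_premises HU CU; subst C.
have [B1 [B2 [BE [B1S B2S']]]] := split_premises HU BU; subst B.
case: (attacks_split C1S B1S C2S' B2S' psi_C cb) =>
  [[D [psi1 [DC [psi_D Db]]]] | [D [psi1 [DC [psi_D Db]]]]];
  exists (D, psi1).
- split; first exact: fsubset_trans DC (fsubsetUl _ _).
  split; first by left; split=> // f /(fsubsetP DC); apply: C1S.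
  by apply: (attacks_sub hat_subU _ Db); apply: fsubsetUl.
- split; first exact: fsubset_trans DC (fsubsetUr _ _).
  split; first by right; split=> // f /(fsubsetP DC); apply: C2S'.
  by apply: (attacks_sub hat_subU _ Db); apply: fsubsetUr.
Qed.

Lemma Arg_over_union (a : argument Form) : Arg vdash S a -> Arg vdash U a.
Proof. by case=> aS psi_a; split=> // f /aS Sf; apply/HU; left. Qed.

Lemma complete_defends_in_union X D : complete S X -> subset_args X D ->
  forall e, X e -> defends U D e.
Proof.
case=> XS [_ [Xdef _]] XD e Xe c Uc ce.
have [c1 [c1c [Sc1 c1e]]] := sub_attacker_in_S Uc (XS e Xe).1 ce.
have [x [Xx xc1]] := Xdef e Xe c1 Sc1 c1e.
by exists x; split; [apply: XD | exact: (attacks_sub hat_subU c1c xc1)].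
Qed.

Lemma complete_absorbs_defended X Y D b :
  complete S X -> complete S' Y -> (forall e, D e -> X e \/ Y e) ->
  Arg vdash S b -> defends U D b -> X b.
Proof.
move=> HX HY DXY Sb Db; apply: HX.2.2.2 => // c Sc cb.
have [e [De ec]] := Db c (Arg_over_union Sc) cb.
case: (DXY e De) => [Xe | Ye]; first by exists e.
have [psi [psi0 psic]] := premiseless_attacker_across (HY.1 e Ye) Sc.1 ec.
by exists (fset0, psi); split=> //; exact: (complete_premiseless hat0 HX psi0).
Qed.

Lemma complete_unattacked_across X (e e' : argument Form) :
  complete S X -> Arg vdash S' e' -> X e -> ~ att e' e.
Proof.
move=> HX S'e' Xe e'e.
have [psi [psi0 psie]] := premiseless_attacker_across S'e' (HX.1 e Xe).1 e'e.
have S_psi : Arg vdash S (fset0, psi) by split=> //= f; rewrite in_fset0.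
have [x [_ /(premiseless_unattacked hat0) //]] := HX.2.2.1 e Xe _ S_psi psie.
Qed.

Lemma complete_restrict F : complete U F -> complete S (fun a => F a /\ Arg vdash S a).
Proof.
move=> HF; have [FU [Fcf [Fdef Fcl]]] := HF.
split; first by move=> a [].
split; first by move=> a b [Fa _] [Fb _]; apply: Fcf.
split=> [a [Fa Sa] c Sc ca | a Sa Da].
- have [f [Ff fc]] := Fdef a Fa c (Arg_over_union Sc) ca.
  have [f1 [f1f [Sf1 f1c]]] := sub_attacker_in_S (FU f Ff) Sc.1 fc.
  exists f1; split=> //; split=> //.
  exact: (complete_sub_closed hat_subU HF Ff (Arg_over_union Sf1) f1f).
- split=> //; apply: Fcl (Arg_over_union Sa) _ => c Uc ca.
  have [c1 [c1c [Sc1 c1a]]] := sub_attacker_in_S Uc Sa.1 ca.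
  have [x [[Fx _] xc1]] := Da c1 Sc1 c1a.
  by exists x; split=> //; exact: (attacks_sub hat_subU c1c xc1).
Qed.

End Primeness.

Definition amalgam (Form : choiceType) (vdash : {fset Form} -> Form -> Prop)
    (contr : Form -> Form -> Prop) (hat : {fset Form} -> {fset Form})
    (U : Form -> Prop) (X Y : argument Form -> Prop) : argument Form -> Prop :=
  fun b => Arg vdash U b /\ defends vdash contr hat U (fun e => X e \/ Y e) b.

Lemma amalgam_subset (Form : choiceType) (vdash : {fset Form} -> Form -> Prop)
    (contr : Form -> Form -> Prop) (hat : {fset Form} -> {fset Form})
    (U : Form -> Prop) (X Y F : argument Form -> Prop) :
  complete_ext vdash contr hat U F -> subset_args X F -> subset_args Y F ->
  subset_args (amalgam vdash contr hat U X Y) F.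
Proof.
case=> _ [_ [_ Fcl]] XF YF b [Ub Db]; apply: Fcl Ub (defends_mono _ Db).
by move=> e [/XF | /YF].
Qed.

Section Amalgam.
Variables (Form : choiceType) (Atom : Type) (atoms : Form -> Atom -> Prop)
  (vdash : {fset Form} -> Form -> Prop) (contr : Form -> Form -> Prop)
  (hat : {fset Form} -> {fset Form}).
Hypothesis hat0 : hat fset0 = fset0.
Hypothesis hat_subU : forall D D' : {fset Form}, hat D `<=` hat (D `|` D').
Hypothesis hat_prime : primeness atoms vdash contr hat.
Variables (S S' U : Form -> Prop).
Hypothesis disjoint : atom_disjoint atoms S S'.
Hypothesis HU : forall f, U f <-> S f \/ S' f.
Variables X Y : argument Form -> Prop.
Local Notation complete := (complete_ext vdash contr hat).
Local Notation E := (amalgam vdash contr hat U X Y).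

Let HU' f : U f <-> S' f \/ S f.
Proof. by rewrite HU; split=> -[]; [right | left | right | left]. Qed.
Let disjoint' := atom_disjoint_sym disjoint.
Let Arg_l : forall a, Arg vdash S a -> Arg vdash U a := Arg_over_union HU.
Let Arg_r : forall a, Arg vdash S' a -> Arg vdash U a := Arg_over_union HU'.
Let defends_l := complete_defends_in_union hat0 hat_subU hat_prime disjoint HU.
Let defends_r := complete_defends_in_union hat0 hat_subU hat_prime disjoint' HU'.
Let absorbs_l := complete_absorbs_defended hat0 hat_prime disjoint HU.
Let absorbs_r := complete_absorbs_defended hat0 hat_prime disjoint' HU'.
Let across_l := complete_unattacked_across hat0 hat_prime disjoint.
Let across_r := complete_unattacked_across hat0 hat_prime disjoint'.
Let restrict_l := complete_restrict hat0 hat_subU hat_prime disjoint HU.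
Let restrict_r := complete_restrict hat0 hat_subU hat_prime disjoint' HU'.

Hypotheses (HX : complete S X) (HY : complete S' Y).

Lemma amalgam_left : subset_args X E.
Proof.
move=> e Xe; split; first exact: Arg_l (HX.1 e Xe).
by apply: defends_l HX _ e Xe => x; left.
Qed.

Lemma amalgam_right : subset_args Y E.
Proof.
move=> e Ye; split; first exact: Arg_r (HY.1 e Ye).
by apply: defends_r HY _ e Ye => x; right.
Qed.

Lemma amalgam_restrict a : X a <-> E a /\ Arg vdash S a.
Proof.
split=> [Xa | [[_ Da] Sa]]; first by split; [apply: amalgam_left | apply: HX.1].
exact: absorbs_l HX HY (fun e De => De) Sa Da.
Qed.

Lemma union_conflict_free : conflict_free contr hat U (fun e => X e \/ Y e).
Proof.
move=> a b [Xa | Ya] [Xb | Yb].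
- exact: HX.2.1.
- move=> ab; exact: across_r HY (HX.1 a Xa) Yb ab.
- move=> ab; exact: across_l HX (HY.1 a Ya) Xb ab.
- exact: HY.2.1.
Qed.

Lemma amalgam_complete : complete U E.
Proof.
have XY_U e : X e \/ Y e -> Arg vdash U e.
  by case=> [/amalgam_left | /amalgam_right] [].
split; first by move=> a [].
split; first by apply: defended_conflict_free union_conflict_free XY_U _ => a [].
split.
  by move=> a [_]; apply: defends_mono => e [/amalgam_left | /amalgam_right].
move=> b Ub Db; split=> // c Uc cb.
have [d [[Ud Dd] dc]] := Db c Uc cb.
have [d1 [d1d [d1_side d1c]]] :=
  sub_attacker_one_side hat_subU hat_prime disjoint HU Ud Uc.1 dc.
have Dd1 := defends_sub hat_subU d1d Dd.
exists d1; split=> //; case: d1_side => [Sd1 | S'd1].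
- by left; exact: (absorbs_l HX HY (fun e De => De) Sd1 Dd1).
- by right; exact: (absorbs_r HY HX (fun e => proj1 (or_comm _ _)) S'd1 Dd1).
Qed.

Lemma subset_amalgam F : complete U F ->
  (forall a, F a -> Arg vdash S a -> X a) -> (forall a, F a -> Arg vdash S' a -> Y a) ->
  subset_args F E.
Proof.
move=> HF FX FY b Fb; split=> [|c Uc cb]; first exact: HF.1 b Fb.
have [f [Ff fc]] := HF.2.2.1 b Fb c Uc cb.
have [f1 [f1f [f1_side f1c]]] :=
  sub_attacker_one_side hat_subU hat_prime disjoint HU (HF.1 f Ff) Uc.1 fc.
have Ff1 : Arg vdash U f1 -> F f1 by move/(complete_sub_closed hat_subU HF Ff); apply.
exists f1; split=> //; case: f1_side => [Sf1 | S'f1].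
- by left; exact: (FX f1 (Ff1 (Arg_l Sf1)) Sf1).
- by right; exact: (FY f1 (Ff1 (Arg_r S'f1)) S'f1).
Qed.

Lemma amalgam_preferred :
  (forall F, complete S F -> subset_args X F -> subset_args F X) ->
  (forall F, complete S' F -> subset_args Y F -> subset_args F Y) ->
  preferred_ext vdash contr hat U E.
Proof.
move=> Xmax Ymax; split=> [|F HF EF]; first exact: amalgam_complete.
apply: subset_amalgam => // a Fa Sa.
- apply: (Xmax _ (restrict_l HF) _ a (conj Fa Sa)) => e Xe.
  by split; [apply/EF/amalgam_left | apply: HX.1].
- apply: (Ymax _ (restrict_r HF) _ a (conj Fa Sa)) => e Ye.
  by split; [apply/EF/amalgam_right | apply: HY.1].
Qed.

Lemma amalgam_grounded :
  (forall F, complete S F -> subset_args X F) ->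
  (forall F, complete S' F -> subset_args Y F) ->
  grounded_ext vdash contr hat U E.
Proof.
move=> Xmin Ymin; split=> [|F HF]; first exact: amalgam_complete.
apply: (amalgam_subset HF) => a.
- by move/(Xmin _ (restrict_l HF)) => [].
- by move/(Ymin _ (restrict_r HF)) => [].
Qed.

End Amalgam.

Theorem lemma7 (Form : choiceType) (Atom : Type) (atoms : Form -> Atom -> Prop)
  (vdash : {fset Form} -> Form -> Prop) (contr : Form -> Form -> Prop)
  (hat : {fset Form} -> {fset Form})
  (hat0 : hat fset0 = fset0)
  (HPR : pre_relevance atoms vdash contr hat)
  (S S' : Form -> Prop) (HSS' : atom_disjoint atoms S S')
  (sem : semantics) (E1 : argument Form -> Prop)
  (HE1 : in_sem vdash contr hat sem S E1) :
  exists E : argument Form -> Prop,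
    in_sem vdash contr hat sem (fun f => S f \/ S' f) E /\
    (forall a, E1 a <-> (E a /\ Arg vdash S a)).
Proof.
have [_ [hat_prime hat_subU]] := HPR.
pose U f := S f \/ S' f.
have HU f : U f <-> S f \/ S' f by [].
pose restrict := amalgam_restrict hat0 hat_subU hat_prime HSS' HU.
case: sem HE1 => /= HE1.
- have [E2 [HE2 _]] := grounded_exists vdash contr hat S'.
  exists (amalgam vdash contr hat U E1 E2); split; last exact: restrict HE1 HE2.
  exact: (amalgam_complete hat0 hat_subU hat_prime HSS' HU HE1 HE2).
- have [E2 [HE2 E2max]] := preferred_exists vdash contr hat S'.
  exists (amalgam vdash contr hat U E1 E2); split; last exact: restrict HE1.1 HE2.
  exact: (amalgam_preferred hat0 hat_subU hat_prime HSS' HU HE1.1 HE2 HE1.2 E2max).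
- have [E2 [HE2 E2min]] := grounded_exists vdash contr hat S'.
  exists (amalgam vdash contr hat U E1 E2); split; last exact: restrict HE1.1 HE2.
  exact: (amalgam_grounded hat0 hat_subU hat_prime HSS' HU HE1.1 HE2 HE1.2 E2min).
Qed.
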